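(* Let $d(n)$ be the number of cubes of $\mathbb{T}$ ending at position $n$. For $m\ge7$ let $\Gamma_{m,1}$ be the integer interval (increasing vector) $[\frac{t_{m}+t_{m-2}-1}{2},\dots,\frac{t_{m+1}+t_{m-1}-3}{2}]$, and for a vector $V=[v_1,\dots,v_r]$ write $d(V)=[d(v_1),\dots,d(v_r)]$. Then $d(n)=0$ for $n\leq51$, and \begin{align*} d(\Gamma_{7,1})&=d([52,\dots,95])=[\underbrace{0,\dots,0}_6,1,\underbrace{0,\dots,0}_{37}];\\ d(\Gamma_{8,1})&=d([96,\dots,176])=[\underbrace{0,\dots,0}_{11},1,1,\underbrace{0,\dots,0}_{30},1,\underbrace{0,\dots,0}_{37}];\\ d(\Gamma_{9,1})&=d([177,\dots,325])=[\underbrace{0,\dots,0}_{20},\underbrace{1,\dots,1}_4,\underbrace{0,\dots,0}_{6},1,\underbrace{0,\dots,0}_{48},1,1,\underbrace{0,\dots,0}_{30},1,\underbrace{0,\dots,0}_{37}]; \end{align*} and for $m\geq10$ (juxtaposition denoting concatenation of vectors and $+$ coordinatewise addition) $$d(\Gamma_{m,1})=[d(\Gamma_{m-3,1}),d(\Gamma_{m-2,1}),d(\Gamma_{m-1,1})]+[\underbrace{0,\dots,0,}_{\frac{-t_{m-2}+5t_{m-4}+1}{2}}\underbrace{1,\dots,1,}_{\frac{t_{m-2}-3t_{m-4}-1}{2}}\underbrace{0,\dots,0}_{t_{m-2}+t_{m-3}}].$$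
   Context: The Tribonacci sequence $\mathbb{T}=x_1x_2x_3\cdots$ is the fixed point (infinite word starting with $a$) of the substitution $\sigma(a)=ab$, $\sigma(b)=ac$, $\sigma(c)=a$ over $\{a,b,c\}$. The Tribonacci numbers are $t_m=|\sigma^m(a)|$ for $m\ge0$, with $t_{-2}=0$, $t_{-1}=1$; thus $t_0=1,t_1=2,t_2=4$ and $t_m=t_{m-1}+t_{m-2}+t_{m-3}$. For a nonempty factor $\omega$ of $\mathbb{T}$ and $p\ge1$, $\omega_p$ denotes the $p$-th occurrence of $\omega$ in $\mathbb{T}$ (occurrences ordered by starting position). A cube is a pair $(\omega,p)$ such that $\omega_{p+1}$ begins immediately after $\omega_p$ ends and $\omega_{p+2}$ begins immediately after $\omega_{p+1}$ ends (i.e. $\omega_p\omega_{p+1}\omega_{p+2}$ is a factor of $\mathbb{T}$); it ends at position $n$ if the last letter of $\omega_{p+2}$ is at position $n$. Thus $d(n)=\#\{(\omega,p):\omega_p\omega_{p+1}\omega_{p+2}\text{ ends at position }n\}$. *)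

From mathcomp Require Import all_boot.
Set Implicit Arguments. Unset Strict Implicit. Unset Printing Implicit Defensive.

(* Letters: a = 0, b = 1, c = 2. *)
Definition sigma_letter (x : nat) : seq nat :=
  match x with 0 => [:: 0; 1] | 1 => [:: 0; 2] | _ => [:: 0] end.

Definition sigma (w : seq nat) : seq nat := flatten (map sigma_letter w).

Definition sigma_iter (k : nat) : seq nat := iter k sigma [:: 0].

(* Tribonacci numbers t_m = |sigma^m(a)|: t_0 = 1, t_1 = 2, t_2 = 4,
   t_m = t_{m-1} + t_{m-2} + t_{m-3}. *)
Fixpoint trib3 (m : nat) : nat * nat * nat :=
  match m with
  | 0 => (1, 2, 4)
  | k.+1 => let: (a, b, c) := trib3 k in (b, c, a + b + c)
  end.
Definition t (m : nat) : nat := (trib3 m).1.1.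

(* Tribonacci word, 1-indexed: x_n for n >= 1.  Each sigma^k(a) is a prefix
   of the fixed point T and |sigma^k(a)| = t_k; we read x_n off sigma^k(a)
   for the least k <= n with n <= t_k (such k exists since t_n >= n). *)
Definition trib (n : nat) : nat :=
  nth 0 (sigma_iter (find (fun k => n <= t k) (iota 0 n.+1))) n.-1.

Definition occurs_at (w : seq nat) (i : nat) : bool :=
  (0 < i) && all (fun k => trib (i + k) == nth 0 w k) (iota 0 (size w)).

Definition next_occ (w : seq nat) (i j : nat) : bool :=
  [&& occurs_at w i, occurs_at w j, i < j &
      all (fun k => ~~ occurs_at w k) (iota i.+1 (j - i.+1))].

Definition factor (i L : nat) : seq nat := mkseq (fun k => trib (i + k)) L.

(* (w, p) is a cube where w_p starts at position i:
   w nonempty, w_{p+1} starts right after w_p, w_{p+2} right after w_{p+1}. *)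
Definition cube_at (w : seq nat) (i : nat) : bool :=
  [&& 0 < size w, next_occ w i (i + size w) & next_occ w (i + size w) (i + 2 * size w)].

(* d(n): number of cubes (w,p) ending at position n.  A pair (w,p) is
   determined by (|w|, start position i of w_p), and w = factor i |w|;
   the cube ends at i + 3|w| - 1 = n, so i = n + 1 - 3|w|. *)
Definition d (n : nat) : nat :=
  count (fun L => (3 * L <= n) && cube_at (factor (n.+1 - 3 * L) L) (n.+1 - 3 * L))
        (iota 1 n).

Definition Gamma (m : nat) : seq nat :=
  let lo := (t m + t (m - 2) - 1) %/ 2 in
  let hi := (t m.+1 + t (m - 1) - 3) %/ 2 in
  iota lo (hi.+1 - lo).

Definition dV (V : seq nat) : seq nat := map d V.

Definition vadd (u v : seq nat) : seq nat := map (fun p => p.1 + p.2) (zip u v).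

From mathcomp Require Import all_boot zify.
Set Implicit Arguments. Unset Strict Implicit. Unset Printing Implicit Defensive.

(* The Tribonacci word has the prefix periodicity x_{t_k + z} = x_z for
   0 < z <= h_k := t_0 + ... + t_{k-1} (tsum k below), and this is sharp:
   x_{h_k + 1} differs from x_{h_k + t_k + 1}.  Desubstituting along sigma
   shows conversely that a run of period p and length at least 2p - 1 has
   p = t_k and extends at most h_k letters beyond one period.  Hence a cube
   of period L at position i is the same thing as a run of period L on
   [i, i + 3L), and its root has no other occurrence inside it.
   Gamma_{a+4,1} is the interval (h_{a+3}, h_{a+4}].  A cube ending at such an
   n either lies in the copy of the prefix shifted by t_{a+3}, where it is a
   cube ending at n - t_{a+3}, or it straddles position t_{a+3}; then the
   mismatches at the ends of the sharp periodicity force its period to be t_a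
   and n to lie in the window [t_{a+3} + 2 t_a, t_{a+3} + h_{a+1}], which gives
   the indicator vector.  The initial values are computed on sigma^10(a). *)

(** * Tribonacci numbers and the prefixes sigma^k(a) *)

Lemma nat_ind3 (P : nat -> Prop) : P 0 -> P 1 -> P 2 ->
  (forall k, P k -> P k.+1 -> P k.+2 -> P k.+3) -> forall k, P k.
Proof.
move=> P0 P1 P2 IH k; suff: [/\ P k, P k.+1 & P k.+2] by case.
by elim: k => [|k [Pk Pk1 Pk2]]; split=> //; apply: IH.
Qed.

Lemma sigma_cat u v : sigma (u ++ v) = sigma u ++ sigma v.
Proof. by rewrite /sigma map_cat flatten_cat. Qed.

Lemma iter_sigma_cat j u v :
  iter j sigma (u ++ v) = iter j sigma u ++ iter j sigma v.
Proof. by elim: j => //= j ->; rewrite sigma_cat. Qed.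

Lemma sigma_iterS k : sigma_iter k.+1 = sigma (sigma_iter k).
Proof. by []. Qed.

Lemma sigma_iter_rec k :
  sigma_iter k.+3 = sigma_iter k.+2 ++ sigma_iter k.+1 ++ sigma_iter k.
Proof.
rewrite /sigma_iter iterSr (_ : sigma [:: 0] = [:: 0] ++ [:: 1]) // iter_sigma_cat.
congr (_ ++ _); rewrite iterSr (_ : sigma [:: 1] = [:: 0] ++ [:: 2]) // iter_sigma_cat.
by congr (_ ++ _); rewrite iterSr.
Qed.

Lemma t_rec k : t k.+3 = t k.+2 + t k.+1 + t k.
Proof. by rewrite /t /=; case: (trib3 k) => [[a b] c] /=; lia. Qed.

Lemma size_sigma_iter k : size (sigma_iter k) = t k.
Proof.
elim/nat_ind3: k => // k IH0 IH1 IH2.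
by rewrite sigma_iter_rec !size_cat IH0 IH1 IH2 t_rec; lia.
Qed.

Lemma t_gt0 k : 0 < t k.
Proof. by elim/nat_ind3: k => // k *; rewrite t_rec; lia. Qed.

Lemma t_add_leq k : t k.+1 + t k <= t k.+2.
Proof. by case: k => // k; rewrite t_rec; lia. Qed.

Lemma t_S_leq_double k : t k.+1 <= 2 * t k.
Proof. by case: k => [|[|k]] //; rewrite t_rec; have := t_add_leq k; lia. Qed.

Lemma t_S_geq_3half k : 3 * t k <= 2 * t k.+1.
Proof. by case: k => [|[|k]] //; rewrite t_rec; have := t_S_leq_double k.+1; lia. Qed.

Lemma ltn_t k l : (t k < t l) = (k < l).
Proof.
have t_incr : {homo t : i j / i < j}.
  apply: (homo_ltn ltn_trans) => -[|[|i]] //; rewrite t_rec.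
  by have := t_gt0 i; have := t_gt0 i.+1; lia.
apply/idP/idP => [tkl|/t_incr //].
by case: (ltngtP k l) => [// | /t_incr | eqkl]; [lia | move: tkl; rewrite eqkl ltnn].
Qed.

Lemma leq_t k l : (t k <= t l) = (k <= l).
Proof. by rewrite leqNgt ltn_t -leqNgt. Qed.

Lemma ltn_id_t k : k < t k.
Proof. by elim: k => // k IH; have := ltn_t k k.+1; rewrite ltnSn; lia. Qed.

Lemma sigma_iter_prefix k l : k <= l -> exists w, sigma_iter l = sigma_iter k ++ w.
Proof.
have step j : exists y, sigma_iter j.+1 = sigma_iter j ++ y.
  by case: j => [|[|j]]; [exists [:: 1] | exists [:: 0; 2] | rewrite sigma_iter_rec; eexists].
move=> /subnKC <-; elim: (l - k) => [|n [w IH]]; first by exists [::]; rewrite addn0 cats0.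
by rewrite addnS; have [y ->] := step (k + n); exists (w ++ y); rewrite IH catA.
Qed.

Lemma trib_sigma_iter k z : 0 < z <= t k -> trib z = nth 0 (sigma_iter k) z.-1.
Proof.
move=> /andP [z_gt0 z_le].
have nth_mono k1 l : k1 <= l -> z <= t k1 ->
    nth 0 (sigma_iter k1) z.-1 = nth 0 (sigma_iter l) z.-1.
  by case/sigma_iter_prefix => w -> ?; rewrite nth_cat size_sigma_iter ifT //; lia.
rewrite /trib; set P := fun k0 => z <= t k0.
have hasP : has P (iota 0 z.+1).
  by apply/hasP; exists z; rewrite ?mem_iota /P; have := ltn_id_t z; lia.
have k0_lt : find P (iota 0 z.+1) < z.+1 by move: hasP; rewrite has_find size_iota.
have := nth_find 0 hasP; rewrite nth_iota // add0n /P; set k0 := find _ _ => z_le0.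
by rewrite (nth_mono k0 (maxn k0 k)) ?leq_maxl // (nth_mono k (maxn k0 k)) ?leq_maxr.
Qed.

Lemma trib_le2 z : trib z <= 2.
Proof.
rewrite /trib; case: find => [|k]; first by case: z.-1 => [|[|]].
rewrite sigma_iterS; have /allP letters_le2 : all (leq^~ 2) (sigma (sigma_iter k)).
  elim: (sigma_iter k) => // x w IH.
  by rewrite -cat1s sigma_cat all_cat IH andbT; case: x => [|[|]].
case: (ltnP z.-1 (size (sigma (sigma_iter k)))) => [/(mem_nth 0)/letters_le2 // |].
by move/(nth_default 0) ->.
Qed.

Lemma size_factor i L : size (factor i L) = L.
Proof. exact: size_mkseq. Qed.

Lemma nth_factor i L u : u < L -> nth 0 (factor i L) u = trib (i + u).
Proof. exact: nth_mkseq. Qed.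

Lemma factor_cat i a b : factor i (a + b) = factor i a ++ factor (i + a) b.
Proof.
apply: (@eq_from_nth _ 0) => [|u]; rewrite ?size_cat !size_factor // => u_lt.
rewrite nth_cat size_factor; case: ltnP => u_a; first by rewrite !nth_factor.
by rewrite !nth_factor -?addnA ?subnKC //; lia.
Qed.

Lemma factor_eqP i j L :
  reflect (forall u, u < L -> trib (i + u) = trib (j + u)) (factor i L == factor j L).
Proof.
apply: (iffP eqP) => [eq_ij u u_lt | eq_ij].
  by rewrite -(nth_factor i u_lt) -(nth_factor j u_lt) eq_ij.
apply: (@eq_from_nth _ 0) => [|u]; rewrite !size_factor // => u_lt.
by rewrite !nth_factor // eq_ij.
Qed.

(** * Periodicity of the prefixes *)

Fixpoint tsum k := if k is k'.+1 then tsum k' + t k' else 0.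

Lemma tsumS k : tsum k.+1 = tsum k + t k.
Proof. by []. Qed.

Lemma tsumS3 k : tsum k.+3 = t k.+3 + tsum k.
Proof. by rewrite !tsumS t_rec; lia. Qed.

Lemma tsumS_double k : 2 * tsum k.+1 + 3 = t k.+2 + t k.
Proof. by elim: k => // k IH; rewrite tsumS t_rec; lia. Qed.

Lemma tsum_lt_double k : tsum k < 2 * t k.
Proof. by elim: k => // k IH; rewrite tsumS; have := t_S_geq_3half k; lia. Qed.

Lemma tsum_leq_tS k : tsum k <= t k.+1.
Proof. by elim: k => // k IH; rewrite tsumS; have := t_add_leq k; lia. Qed.

Lemma t_leq_tsum k : 3 <= k -> t k <= tsum k.
Proof.
elim: k => // k IH; rewrite ltnS leq_eqVlt => /orP [/eqP <- // | /IH le_k].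
by rewrite tsumS; have := t_S_leq_double k; lia.
Qed.

Lemma leq_tsum k l : (tsum k <= tsum l) = (k <= l).
Proof.
have tsum_mono : {homo tsum : i j / i <= j}.
  by move=> i j /subnKC <-; elim: (j - i) => [|n IH]; rewrite ?addn0 // addnS tsumS; lia.
apply/idP/idP => [le_kl|/tsum_mono //]; case: (leqP k l) => // lt_lk.
by have := tsum_mono _ _ lt_lk; rewrite tsumS; have := t_gt0 l; lia.
Qed.

Lemma trib_shift_tSS j z : 0 < z <= t j.+1 + t j -> trib (t j.+2 + z) = trib z.
Proof.
move=> z_bd; have := t_add_leq j => le_t; have [w S_j2] : exists w,
    sigma_iter j.+2 = sigma_iter j.+1 ++ sigma_iter j ++ w.
  by case: j {z_bd le_t} => [|j]; [exists [:: 2] | rewrite sigma_iter_rec; eexists].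
rewrite (trib_sigma_iter (k := j.+3)); last by rewrite t_rec; lia.
rewrite sigma_iter_rec nth_cat size_sigma_iter ifF; last lia.
rewrite (trib_sigma_iter (k := j.+2)); last lia.
by rewrite S_j2 catA [RHS]nth_cat size_cat !size_sigma_iter ifT; [congr nth | ]; lia.
Qed.

Lemma trib_shift k z : 0 < z <= tsum k -> trib (t k + z) = trib z.
Proof.
elim/ltn_ind: k z => -[|[|[|k]]] IH z z_bd; first by move: z_bd; rewrite /= /t /=; lia.
- by have -> : z = 1 by move: z_bd; rewrite /= /t /=; lia.
- by apply: (trib_shift_tSS (j := 0)); move: z_bd; rewrite /= /t /=; lia.
rewrite tsumS3 in z_bd; have := tsum_leq_tS k; have := t_rec k; have := t_rec k.+1 => *.
case: (leqP z (t k.+2 + t k.+1)) => [z_le|z_gt]; first by apply: trib_shift_tSS; lia.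
set z' := z - (t k.+2 + t k.+1).
have -> : t k.+3 + z = t k.+4 + z' by rewrite /z'; lia.
rewrite trib_shift_tSS; last by rewrite /z'; lia.
have -> : z = t k.+2 + (t k.+1 + z') by rewrite /z'; lia.
rewrite IH; [|lia|rewrite !tsumS /z'; lia].
by rewrite IH // tsumS /z'; lia.
Qed.

Lemma trib_tsumS k : trib (tsum k).+1 = k %% 3.
Proof.
elim/nat_ind3: k => [|||k IH _ _]; try by rewrite (trib_sigma_iter (k := 2)).
rewrite tsumS3 -addnS trib_shift; last by have := tsumS3 k; have := t_gt0 k.+3; lia.
by rewrite IH; lia.
Qed.

Lemma trib_t k : trib (t k) = k %% 3.
Proof.
elim/nat_ind3: k => [|||k IH _ _]; try by rewrite (trib_sigma_iter (k := 2)).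
have := t_gt0 k; have := t_gt0 k.+1; have := t_gt0 k.+2 => *.
rewrite (trib_sigma_iter (k := k.+3)); last by rewrite t_gt0 leqnn.
rewrite sigma_iter_rec !nth_cat !size_sigma_iter t_rec !ifF; [|lia|lia].
rewrite (_ : k.+3 %% 3 = k %% 3) -?IH; last lia.
by rewrite (trib_sigma_iter (k := k)); [congr nth | ]; lia.
Qed.

Lemma trib_shift_break k : trib (tsum k).+1 != trib (tsum k + t k).+1.
Proof. by rewrite -tsumS !trib_tsumS; lia. Qed.

(** * Desubstitution *)

(* Since T = sigma T, the image of x_{j+1} occupies the positions
   (sigma_pos j, sigma_pos j.+1] of T. *)
Definition sigma_pos j := size (sigma (factor 1 j)).

Lemma factor1_sigma_iter j : factor 1 j = take j (sigma_iter j).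
Proof.
have j_lt := ltn_id_t j; apply: (@eq_from_nth _ 0) => [|u].
  by rewrite size_factor size_take size_sigma_iter; case: ifP; lia.
rewrite size_factor => u_lt.
by rewrite nth_factor // nth_take // (trib_sigma_iter (k := j)) //; lia.
Qed.

Lemma sigma_factor1 j : sigma (factor 1 j) = factor 1 (sigma_pos j).
Proof.
have sigma_iter_split : sigma_iter j.+1 = sigma (factor 1 j) ++ sigma (drop j (sigma_iter j)).
  by rewrite sigma_iterS -{1}(cat_take_drop j (sigma_iter j)) sigma_cat factor1_sigma_iter.
have pos_le : sigma_pos j <= t j.+1.
  by rewrite -size_sigma_iter sigma_iter_split size_cat leq_addr.
apply: (@eq_from_nth _ 0) => [|u u_lt]; first by rewrite size_factor.
rewrite nth_factor // (trib_sigma_iter (k := j.+1)); last by move: pos_le; rewrite /sigma_pos; lia.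
by rewrite sigma_iter_split nth_cat ifT.
Qed.

Lemma sigma_pos_add j N : sigma_pos (j + N) = sigma_pos j + size (sigma (factor j.+1 N)).
Proof. by rewrite /sigma_pos factor_cat sigma_cat size_cat add1n. Qed.

Lemma factor_sigma_pos j N :
  factor (sigma_pos j).+1 (sigma_pos (j + N) - sigma_pos j) = sigma (factor j.+1 N).
Proof.
have := sigma_factor1 (j + N); rewrite factor_cat sigma_cat sigma_factor1.
have le_pos : sigma_pos j <= sigma_pos (j + N) by rewrite sigma_pos_add leq_addr.
rewrite -(subnKC le_pos).
rewrite factor_cat subnKC ?sigma_pos_add ?leq_addr // addKn add1n => /eqP.
by rewrite eqseq_cat ?size_factor // => /andP [_ /eqP].
Qed.

Lemma trib_sigma_pos j u : u < size (sigma_letter (trib j.+1)) ->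
  trib ((sigma_pos j).+1 + u) = nth 0 (sigma_letter (trib j.+1)) u.
Proof.
have := factor_sigma_pos j 1; rewrite sigma_pos_add addKn.
have -> : sigma (factor j.+1 1) = sigma_letter (trib j.+1) by rewrite /sigma /= addn0 cats0.
by move=> E u_lt; rewrite -E nth_factor.
Qed.

Lemma sigma_posS j : sigma_pos j.+1 = sigma_pos j + size (sigma_letter (trib j.+1)).
Proof. by rewrite -addn1 sigma_pos_add /sigma /= addn0 addn1 cats0. Qed.

Lemma size_sigma_letter x : 0 < size (sigma_letter x) <= 2.
Proof. by case: x => [|[|x]]. Qed.

Lemma trib_sigma_pos1 j : trib (sigma_pos j).+1 = 0.
Proof.
have /andP [size_gt0 _] := size_sigma_letter (trib j.+1).
by have := trib_sigma_pos size_gt0; rewrite addn0 => ->; case: (trib j.+1) => [|[|]].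
Qed.

(* The letter after the leading a of sigma x: b, c, or, for x = c, the a
   that starts the next block. *)
Definition next_letter x := x.+1 %% 3.

Lemma next_letter_inj x y : x <= 2 -> y <= 2 -> next_letter x = next_letter y -> x = y.
Proof. by case: x => [|[|[|x]]] //; case: y => [|[|[|y]]]. Qed.

Lemma trib_sigma_pos2 j : trib (sigma_pos j).+2 = next_letter (trib j.+1).
Proof.
have := trib_le2 j.+1; case E: (trib j.+1) => [|[|[|x]]] // _;
  try by rewrite -addn1 trib_sigma_pos E.
have -> : (sigma_pos j).+2 = (sigma_pos j.+1).+1 by rewrite sigma_posS E addn1.
by rewrite trib_sigma_pos1.
Qed.

Lemma trib_sigma_posS j : trib (sigma_pos j.+1) = next_letter (trib j.+1).
Proof.
have := trib_le2 j.+1; rewrite sigma_posS; case E: (trib j.+1) => [|[|[|x]]] // _ /=;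
  try by rewrite (_ : _ + 2 = (sigma_pos j).+1 + 1); [rewrite trib_sigma_pos E | lia].
by rewrite addn1 trib_sigma_pos1.
Qed.

Lemma sigma_pos_t k : sigma_pos (t k) = t k.+1.
Proof.
rewrite /sigma_pos (_ : factor 1 (t k) = sigma_iter k) -?sigma_iterS ?size_sigma_iter //.
apply: (@eq_from_nth _ 0) => [|u]; rewrite size_factor ?size_sigma_iter // => u_lt.
by rewrite nth_factor // (trib_sigma_iter (k := k)) //; lia.
Qed.

Lemma leq_sigma_pos_addn j N : sigma_pos j + N <= sigma_pos (j + N).
Proof.
elim: N => [|N IH]; first by rewrite !addn0.
by rewrite !addnS sigma_posS; have := size_sigma_letter (trib (j + N).+1); lia.
Qed.

Lemma leq_sigma_pos j l : j <= l -> sigma_pos j <= sigma_pos l.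
Proof. by move=> /subnKC <-; have := leq_sigma_pos_addn j (l - j); lia. Qed.

Lemma leq_id_sigma_pos j : j <= sigma_pos j.
Proof. exact: leq_sigma_pos_addn 0 j. Qed.

Lemma ltn_id_sigma_pos j : 0 < j -> j < sigma_pos j.
Proof.
have pos1 : sigma_pos 1 = 2 by rewrite sigma_posS (trib_sigma_iter (k := 0)).
by case: j => // j _; have := leq_sigma_pos_addn 1 j; rewrite pos1 add1n; lia.
Qed.

Lemma sigma_pos_cover p : 0 < p -> exists j, sigma_pos j < p <= sigma_pos j.+1.
Proof.
elim: p => // -[_ _|p IH _]; first by exists 0; rewrite sigma_posS.
have [j /andP [lt_p le_p]] := IH isT; case: (ltnP p.+1 (sigma_pos j.+1)) => lt_pS.
  by exists j; lia.
by exists j.+1; rewrite [sigma_pos j.+2]sigma_posS; have := size_sigma_letter (trib j.+2); lia.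
Qed.

Lemma trib0_sigma_pos p : 0 < p -> trib p = 0 -> exists j, p = (sigma_pos j).+1.
Proof.
move=> /sigma_pos_cover [j /andP [lt_p]]; rewrite sigma_posS => le_p p_a; exists j.
case: (ltnP p (sigma_pos j).+2) => [|ge_p]; first lia.
have p_eq : p = (sigma_pos j).+2 by move: le_p; have := size_sigma_letter (trib j.+1); lia.
move: le_p p_a; rewrite p_eq trib_sigma_pos2.
by case: (trib j.+1) (trib_le2 j.+1) => [|[|[|]]] //=; lia.
Qed.

Lemma trib_pred_neq0 p : 0 < p -> trib p != 0 -> 1 < p /\ trib p.-1 = 0.
Proof.
move=> /sigma_pos_cover [j /andP [lt_p le_p]] p_neq0.
case: (ltnP p (sigma_pos j).+2) => [lt_pS|ge_p].
  by move: p_neq0; rewrite (_ : p = (sigma_pos j).+1) ?trib_sigma_pos1 //; lia.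
have -> : p.-1 = (sigma_pos j).+1.
  by move: le_p; rewrite sigma_posS; have := size_sigma_letter (trib j.+1); lia.
by rewrite trib_sigma_pos1; lia.
Qed.

Lemma sigma_posSS j : sigma_pos j + 3 <= sigma_pos j.+2.
Proof.
rewrite !sigma_posS; have := size_sigma_letter (trib j.+1).
case E: (trib j.+2) => [|[|x]] /=; try lia.
have [_ ->] : 1 < j.+2 /\ trib j.+2.-1 = 0 by apply: trib_pred_neq0; rewrite ?E.
by rewrite /=; lia.
Qed.

Lemma sigma_pos_add_prefix j r :
  factor j.+1 r = factor 1 r -> sigma_pos (j + r) = sigma_pos j + sigma_pos r.
Proof. by move=> pre; rewrite sigma_pos_add pre. Qed.

Lemma trib_sigma_pos_prefix j r : factor j.+1 r = factor 1 r ->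
  forall v, v <= sigma_pos r -> trib ((sigma_pos j).+1 + v) = trib v.+1.
Proof.
move=> pre v; rewrite leq_eqVlt => /orP [/eqP -> | v_lt].
  by rewrite addSn -sigma_pos_add_prefix // !trib_sigma_pos1.
have := factor_sigma_pos j r; rewrite sigma_pos_add_prefix // addKn pre sigma_factor1.
by move/eqP/factor_eqP/(_ v v_lt) => ->; rewrite add1n.
Qed.

(** * Periods and runs *)

Lemma sigma_pos_period j : 0 < j ->
  (forall z, 0 < z < sigma_pos j -> trib z = trib (z + sigma_pos j)) ->
  forall z, 0 < z < j -> trib z = trib (z + j).
Proof.
move=> j_gt0 per z; elim/ltn_ind: z => z IH /andP [z_gt0 z_lt].
set r := z.-1; have z_eq : z = r.+1 by rewrite /r; lia.
have pre : factor j.+1 r = factor 1 r.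
  apply/eqP/factor_eqP => u u_lt; rewrite add1n (IH u.+1); [congr trib | |]; lia.
have inside : (sigma_pos r).+2 < sigma_pos j.
  by have := sigma_posSS r; have := @leq_sigma_pos r.+2 j; lia.
apply: next_letter_inj; rewrite ?trib_le2 // z_eq -trib_sigma_pos2 per ?inside //.
have -> : (sigma_pos r).+2 + sigma_pos j = (sigma_pos (j + r)).+2.
  by rewrite sigma_pos_add_prefix //; lia.
by rewrite trib_sigma_pos2; congr (next_letter (trib _)); lia.
Qed.

Lemma prefix_period_t L : 0 < L ->
  (forall z, 0 < z < L -> trib z = trib (z + L)) -> exists k, L = t k.
Proof.
elim/ltn_ind: L => L IH L_gt0 per.
case: (ltnP L 2) => [L_lt2 | L_ge2]; first by exists 0; rewrite /t /=; lia.
have L_a : trib L.+1 = 0.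
  by rewrite -addn1 addnC -per ?(trib_sigma_iter (k := 0)) //; lia.
have [j /eqP] := trib0_sigma_pos (ltn0Sn L) L_a; rewrite eqSS => /eqP L_eq.
have j_gt0 : 0 < j by case: j L_eq => // L_eq; move: L_ge2; rewrite L_eq.
have [k j_eq] : exists k, j = t k.
  apply: IH => //; first by rewrite L_eq ltn_id_sigma_pos.
  by apply: sigma_pos_period; rewrite // -L_eq.
by exists k.+1; rewrite L_eq j_eq sigma_pos_t.
Qed.

Lemma left_special_sigma_pos p q : 1 < p -> 1 < q ->
  trib p.-1 != trib q.-1 -> trib p = trib q ->
  exists j j', [/\ p = (sigma_pos j.+1).+1, q = (sigma_pos j'.+1).+1
                 & trib j.+1 != trib j'.+1].
Proof.
move=> p_gt1 q_gt1 pre_neq eq_pq.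
have p_a : trib p = 0.
  apply/eqP; apply: contraT => p_neq0; have q_neq0 : trib q != 0 by rewrite -eq_pq.
  move: pre_neq; have [_ ->] := trib_pred_neq0 (ltnW p_gt1) p_neq0.
  by have [_ ->] := trib_pred_neq0 (ltnW q_gt1) q_neq0.
have [[|j] p_eq] := trib0_sigma_pos (ltnW p_gt1) p_a; first by rewrite p_eq in p_gt1.
have [[|j'] q_eq] := trib0_sigma_pos (ltnW q_gt1) (etrans (esym eq_pq) p_a).
  by rewrite q_eq in q_gt1.
exists j, j'; split=> //; apply: contra pre_neq => /eqP eq_jj.
by rewrite p_eq q_eq /= !trib_sigma_posS eq_jj.
Qed.

(* Both occurrences start a sigma-block; their preimages are preceded by
   distinct letters and agree on a shorter factor, which by induction is a
   prefix and maps back onto the prefix of length n. *)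
Lemma left_special_prefix n p q : 1 < p -> 1 < q -> trib p.-1 != trib q.-1 ->
  factor p n = factor q n -> factor p n = factor 1 n.
Proof.
elim/ltn_ind: n p q => -[|N] IH p q p_gt1 q_gt1 pre_neq; first by [].
move=> /eqP/factor_eqP eq_pq.
have [j [j' [p_eq q_eq jj_neq]]] : exists j j',
    [/\ p = (sigma_pos j.+1).+1, q = (sigma_pos j'.+1).+1 & trib j.+1 != trib j'.+1].
  by apply: left_special_sigma_pos; rewrite // -[p]addn0 -[q]addn0 eq_pq.
set P := fun v => trib (j.+2 + v) != trib (j'.+2 + v); set r := find P (iota 0 N).
have r_le : r <= N by have := find_size P (iota 0 N); rewrite size_iota.
have agree : factor j.+2 r = factor j'.+2 r.
  apply/eqP/factor_eqP => v v_lt; have := before_find 0 v_lt.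
  by rewrite nth_iota ?add0n /P; [move/negbFE/eqP | lia].
have pre : factor j.+2 r = factor 1 r by apply: (IH r _ j.+2 j'.+2).
have pre' : factor j'.+2 r = factor 1 r by rewrite -agree.
have N_le : N <= sigma_pos r.
  case: (ltnP r N) => [r_lt | ?]; last by have := leq_id_sigma_pos r; lia.
  have has_mismatch : has P (iota 0 N) by rewrite has_find size_iota.
  have := nth_find 0 has_mismatch; rewrite -/r nth_iota // add0n /P; apply: contraNleq => lt_N.
  have := eq_pq (sigma_pos r).+1 lt_N.
  have shift l : factor l.+2 r = factor 1 r ->
      (sigma_pos l.+1).+1 + (sigma_pos r).+1 = (sigma_pos (l.+1 + r)).+2.
    by move=> pre_l; rewrite sigma_pos_add_prefix //; lia.
  rewrite p_eq q_eq !shift // !trib_sigma_pos2.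
  by move/(next_letter_inj (trib_le2 _) (trib_le2 _)); rewrite -!addSn => ->.
apply/eqP/factor_eqP => u u_lt; rewrite p_eq (trib_sigma_pos_prefix pre) ?add1n //; lia.
Qed.

Lemma period_extend_left p i N : 0 < i -> factor i N = factor (i + p) N ->
  exists s N', [/\ 0 < s, N <= N', factor s N' = factor (s + p) N'
                 & s = 1 \/ trib s.-1 != trib (s.-1 + p)].
Proof.
elim: i N => // -[|i] IH N _ per; first by exists 1, N; split=> //; left.
case: (eqVneq (trib i.+1) (trib (i.+1 + p))) => [eq_i | neq_i]; last first.
  by exists i.+2, N; split=> //; right.
have [|s [N' [s_gt0 le_N per_s left]]] := IH N.+1 isT; last by exists s, N'; split=> //; lia.
move/eqP/factor_eqP: per => per; apply/eqP/factor_eqP => -[|u] u_lt.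
  by rewrite !addn0 eq_i.
by rewrite -!addSnnS per // addSn.
Qed.

Lemma run_period_t i p N : 0 < i -> 0 < p -> p.*2 <= N.+1 ->
  factor i N = factor (i + p) N -> exists k, p = t k /\ N <= p + tsum k.
Proof.
move=> i_gt0 p_gt0 long /(period_extend_left i_gt0) [s [N' [s_gt0 le_N per left]]].
have pre : factor s N' = factor 1 N'.
  case: (eqVneq s 1) => [-> // | s_neq1].
  have {}left : trib s.-1 != trib (s.-1 + p) by case: left s_neq1 => [->|].
  apply: (left_special_prefix (q := s + p)) => //; [lia | lia |].
  by rewrite (_ : (s + p).-1 = s.-1 + p) //; lia.
have prefix_per u : u + p < N' -> trib u.+1 = trib (u.+1 + p).
  move/eqP/factor_eqP: pre => pre; move/eqP/factor_eqP: per => per u_lt.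
  rewrite -add1n -pre; last lia.
  rewrite per; last lia.
  by rewrite -addnA [p + u]addnC pre ?addnA //; lia.
have [k p_eq] : exists k, p = t k.
  by apply: prefix_period_t => // -[|z] // /andP [_ z_lt]; apply: prefix_per; lia.
exists k; split=> //; case: (leqP N (p + tsum k)) => // long_run.
have := trib_shift_break k; rewrite prefix_per; last lia.
by rewrite p_eq -addSn eqxx.
Qed.

(** * Cubes *)

Definition is_cube_at i L := factor i L.*2 == factor (i + L) L.*2.

Lemma is_cube_atP i L :
  reflect (forall z, i <= z < i + L.*2 -> trib z = trib (z + L)) (is_cube_at i L).
Proof.
apply: (iffP (factor_eqP _ _ _)) => per z z_bd.
  have -> : z = i + (z - i) by lia.
  by rewrite per; [congr trib | ]; lia.
by rewrite per; [congr trib | ]; lia.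
Qed.

Lemma occurs_at_factorP i L j :
  reflect (0 < j /\ factor j L = factor i L) (occurs_at (factor i L) j).
Proof.
rewrite /occurs_at size_factor.
apply: (iffP andP) => -[j_gt0 occ]; split=> //.
  apply/eqP/factor_eqP => u u_lt; move/allP/(_ u): occ.
  by rewrite mem_iota nth_factor //= => /(_ u_lt)/eqP.
apply/allP => u; rewrite mem_iota /= => u_lt.
by rewrite nth_factor //; move/eqP/factor_eqP: occ => ->.
Qed.

Lemma modn_gt0_double r L : 0 < r < L.*2 -> r != L -> 0 < r %% L.
Proof.
move=> r_bd; apply: contraR; rewrite -leqNgt leqn0 => /eqP r_mod0.
have q_lt2 : r %/ L < 2 by rewrite ltn_divLR; lia.
move: r_bd; rewrite (divn_eq r L) r_mod0 addn0.
by case: (r %/ L) q_lt2 => [|[|]] //; rewrite mul1n.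
Qed.

Lemma cube_no_inner_occurrence i L r : 0 < i -> 0 < r < L.*2 -> r != L ->
  is_cube_at i L -> factor (i + r) L != factor i L.
Proof.
move=> i_gt0 r_bd r_neqL /is_cube_atP cube; apply/negP => /factor_eqP occ.
have L_gt0 : 0 < L by lia.
(* G is the periodic extension of the root; the inner occurrence makes it
   periodic with period r mod L, hence with some period p <= L/2, and the
   cube then contains a run of period p that run_period_t forbids. *)
pose G v := trib (i + v %% L).
have cube_mod a : a < 3 * L -> trib (i + a) = G a.
  elim/ltn_ind: a => a IH a_lt; case: (ltnP a L) => [a_ltL | a_geL].
    by rewrite /G modn_small.
  rewrite -(subnK a_geL) addnA -cube ?IH /G ?modnDr //; lia.
have G_mod v : G (v + r %% L) = G v.
  have := occ (v %% L) (ltn_pmod v L_gt0); rewrite -addnA cube_mod; last first.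
    by have := ltn_pmod v L_gt0; lia.
  by rewrite /G !modnDmr [v + r]addnC => ->.
have r_mod := modn_gt0_double r_bd r_neqL.
have r_modL := ltn_pmod r L_gt0.
set p := minn (r %% L) (L - r %% L).
have p_gt0 : 0 < p by rewrite /p; lia.
have p_half : p.*2 <= L by rewrite /p; lia.
have G_p v : G (v + p) = G v.
  rewrite /p /minn; case: ifP => _; first exact: G_mod.
  by rewrite -(G_mod (v + (L - r %% L))) -addnA subnK ?(ltnW r_modL) // /G modnDr.
have per : factor i (3 * L - p) = factor (i + p) (3 * L - p).
  apply/eqP/factor_eqP => u u_lt.
  by rewrite -addnA [p + u]addnC !cube_mod ?G_p //; lia.
have long : p.*2 <= (3 * L - p).+1 by lia.
have [k [p_eq run]] := run_period_t i_gt0 p_gt0 long per.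
by have := tsum_lt_double k; lia.
Qed.

Lemma cube_atE i L : 0 < i -> 0 < L -> cube_at (factor i L) i = is_cube_at i L.
Proof.
move=> i_gt0 L_gt0; rewrite /cube_at /next_occ size_factor L_gt0 /=.
have -> : i + 2 * L = i + L + L by lia.
rewrite /is_cube_at -addnn !factor_cat eqseq_cat ?size_factor //.
apply/idP/idP.
  by case/andP => /and4P [_ /occurs_at_factorP [_ ->] _ _]
                 /and4P [_ /occurs_at_factorP [_ ->] _ _]; rewrite !eqxx.
case/andP => /eqP occ1 /eqP occ2.
have occ k : k \in [:: i; i + L; i + L + L] -> occurs_at (factor i L) k.
  rewrite !inE => k_in; apply/occurs_at_factorP; split; first lia.
  by case/or3P: k_in => /eqP ->; rewrite -?occ2 -?occ1.
have no_inner k : i < k < i + L.*2 -> k != i + L -> ~~ occurs_at (factor i L) k.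
  move=> k_bd k_neq; apply/negP => /occurs_at_factorP [_].
  have -> : k = i + (k - i) by lia.
  by apply/eqP/cube_no_inner_occurrence;
    rewrite /is_cube_at -?addnn ?factor_cat ?occ1 ?occ2 //; lia.
have [lt1 lt2] : i < i + L /\ i + L < i + L + L by lia.
rewrite !occ ?inE ?eqxx ?orbT //= lt1 lt2 /=.
apply/andP; split; apply/allP => k; rewrite mem_iota => k_bd; apply: no_inner; lia.
Qed.

Definition ends_cube n L := (3 * L <= n) && is_cube_at (n.+1 - 3 * L) L.

Lemma dE n : d n = count (ends_cube n) (iota 1 n).
Proof.
apply: eq_in_count => L; rewrite mem_iota => /andP [L_gt0 _].
by rewrite /ends_cube; case: leqP => //= le_n; rewrite cube_atE //; lia.
Qed.

(** * The recursion for d *)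

Lemma is_cube_at_shift k i L : 0 < i -> i + 3 * L <= (tsum k).+1 ->
  is_cube_at (t k + i) L = is_cube_at i L.
Proof.
move=> i_gt0 fits.
have shift z : 0 < z < i + 3 * L -> trib (t k + z) = trib z.
  by move=> ?; apply: trib_shift; lia.
by apply/factor_eqP/factor_eqP => cube u u_lt; have := cube u u_lt;
  rewrite -!addnA !shift ?addnA //; lia.
Qed.

Lemma ends_cube_shift k n L : t k <= n <= t k + tsum k -> 0 < L -> 3 * L <= n - t k ->
  ends_cube n L = ends_cube (n - t k) L.
Proof.
move=> n_bd L_gt0 L_fits; rewrite /ends_cube L_fits (leq_trans L_fits (leq_subr _ _)).
have -> : n.+1 - 3 * L = t k + ((n - t k).+1 - 3 * L) by lia.
by apply: is_cube_at_shift; lia.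
Qed.

(* A cube ending at n in Gamma_{a+4,1} that is not contained in the copy of
   the prefix shifted by t_{a+3}. *)
Section StraddlingCube.

Variables a n L : nat.
Hypotheses (a_ge6 : 6 <= a) (n_gt : tsum a.+3 < n) (n_le : n <= tsum a.+4).
Hypotheses (L_gt0 : 0 < L) (L_fits : 3 * L <= n) (straddles : n - t a.+3 < 3 * L).
Hypothesis cube : is_cube_at (n.+1 - 3 * L) L.

Let i := n.+1 - 3 * L.

Let mismatch_outside x : trib x != trib (x + L) -> x < i \/ i + L.*2 <= x.
Proof.
move=> neq; case: (ltnP x i) => [|ge_i]; [by left | right].
by apply: contraNleq neq => lt_x; apply/eqP/(is_cube_atP _ _ cube); rewrite ge_i.
Qed.

Let t_a_le_tsum : t a <= tsum a.
Proof. by apply: t_leq_tsum; lia. Qed.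

Let i_gt0 : 0 < i.
Proof. by rewrite /i; lia. Qed.

Let period_t : exists k, L = t k /\ k < a.+3.
Proof.
have [k [L_eq _]] := run_period_t i_gt0 L_gt0 (leqnSn _) (eqP cube).
exists k; split=> //; rewrite -ltn_t -L_eq.
by have := tsum_lt_double a.+3; have := tsumS a.+3; lia.
Qed.

Let i_le : i <= t a.+3.
Proof. by rewrite /i; lia. Qed.

Let upper_bound k : L = t k -> k <= a -> n <= t a.+3 + tsum k.+1.
Proof.
move=> L_eq k_le; set x := t a.+3 + (tsum k).+1.
have tsum_le : tsum k.+1 <= tsum a.+2 by rewrite leq_tsum; lia.
have := tsumS k; have := tsumS a.+2; have := t_gt0 a.+2 => *.
have x_neq : trib x != trib (x + L).
  by rewrite /x L_eq -addnA addSn !trib_shift ?trib_shift_break //; lia.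
by case: (mismatch_outside x_neq); rewrite /x /i tsumS; lia.
Qed.

(* Each case exhibits a mismatch x_y != x_{y+L} that the cube must avoid:
   y = t_{a+3} + h_k + 1 when k = a mod 3 (upper_bound), y = t_{a+3}
   otherwise, and in addition y = t_{a+2} + h_{a+1} + 1 when k = a + 1. *)
Lemma straddling_cube_period : L = t a.
Proof.
have [k [L_eq k_lt]] := period_t.
case: (eqVneq (k %% 3) (a %% 3)) => k_mod.
  have k_le : k <= a by lia.
  have : tsum a < tsum k.+1 by have := upper_bound L_eq k_le; have := tsumS3 a; lia.
  by rewrite ltnNge leq_tsum -ltnNge ltnS L_eq => k_ge; rewrite (_ : k = a) //; lia.
exfalso; have tk_le : t k <= t a.+3 by rewrite leq_t; lia.
have x_neq : trib (t a.+3) != trib (t a.+3 + L).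
  by rewrite L_eq trib_shift ?trib_t; have := tsumS3 a; have := t_gt0 k; lia.
case: (mismatch_outside x_neq) => [|]; first lia; rewrite /i => below.
have : t a < t k by rewrite -L_eq; have := tsumS3 a; lia.
rewrite ltn_t => k_gt; have [k_eq | k_eq] : k = a.+1 \/ k = a.+2 by lia.
  set y := t a.+2 + (tsum a.+1).+1.
  have y_neq : trib y != trib (y + L).
    rewrite /y L_eq trib_shift; last by have := t_gt0 a.+1; rewrite (tsumS a.+1); lia.
    rewrite (_ : _ + t k = (tsum a.+3).+1) ?k_eq ?trib_tsumS; first lia.
    by rewrite !tsumS; lia.
  have := tsumS a; have := tsumS a.+1; have := tsumS a.+2; have := t_rec a.
  by case: (mismatch_outside y_neq); rewrite /y /i L_eq k_eq in below *; lia.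
by move: L_eq; rewrite k_eq; have := t_add_leq a; have := t_rec a; lia.
Qed.

Lemma straddling_cube_window : t a.+3 + 2 * t a <= n <= t a.+3 + tsum a.+1.
Proof.
have L_eq := straddling_cube_period; rewrite upper_bound // andbT.
set w := t a.+2 + t a.+1.
have w_neq : trib w != trib (w + L).
  rewrite /w L_eq trib_shift ?trib_t -?t_rec ?trib_t; first lia.
  by rewrite !tsumS; have := t_gt0 a.+1; lia.
have := tsumS3 a; have := t_rec a.
by case: (mismatch_outside w_neq); rewrite /w /i L_eq; lia.
Qed.

End StraddlingCube.

Lemma cube_window a n : 6 <= a -> t a.+3 + 2 * t a <= n <= t a.+3 + tsum a.+1 ->
  is_cube_at (n.+1 - 3 * t a) (t a).
Proof.
move=> a_ge6 n_in; apply/is_cube_atP => z z_in.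
have := t_rec a; have := tsumS a; have := tsumS a.+1; have := tsumS3 a; have := t_gt0 a.
have : t a <= tsum a by apply: t_leq_tsum; lia.
move=> *; case: (leqP z (t a.+3)) => z_le.
  set u := z - (t a.+2 + t a.+1).
  have -> : z = t a.+2 + (t a.+1 + u) by rewrite /u; lia.
  rewrite !trib_shift; [|lia|lia].
  by rewrite (_ : _ + t a = t a.+3 + u) ?trib_shift //; lia.
set u := z - t a.+3; have -> : z = t a.+3 + u by rewrite /u; lia.
by rewrite -addnA !trib_shift ?[u + _]addnC ?trib_shift //; lia.
Qed.

Lemma count_split (T : Type) (P B : pred T) s :
  count P s = count (predI P B) s + count (predI P (predC B)) s.
Proof. by elim: s => //= x s ->; case: (P x); case: (B x) => /=; lia. Qed.

Lemma count_singleton (P : pred nat) x0 s : uniq s -> x0 \in s ->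
  (forall x, P x -> x = x0) -> count P s = P x0.
Proof.
move=> s_uniq x0_in only_x0.
have -> : count P s = P x0 * count_mem x0 s.
  elim: s {s_uniq x0_in} => [|x s /= ->]; first by rewrite muln0.
  rewrite mulnDr; case: eqP => [-> | neq].
    by rewrite muln1.
  by case: (boolP (P x)) => [/only_x0/neq [] | _]; rewrite muln0.
by rewrite count_uniq_mem // x0_in muln1.
Qed.

Lemma d_rec a n : 6 <= a -> tsum a.+3 < n <= tsum a.+4 ->
  d n = d (n - t a.+3) + (t a.+3 + 2 * t a <= n <= t a.+3 + tsum a.+1).
Proof.
move=> a_ge6 /andP [n_gt n_le].
have : t a <= tsum a by apply: t_leq_tsum; lia.
have := t_rec a; have := tsumS a; have := tsumS a.+3; have := tsumS3 a.
have := tsum_lt_double a => *.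
rewrite !dE (count_split _ (fun L => 3 * L <= n - t a.+3)); congr (_ + _).
  rewrite -[n in iota 1 n](subnKC (leq_subr (t a.+3) n)) iotaD count_cat.
  rewrite [X in _ + X](eq_in_count (a2 := pred0)) ?count_pred0 ?addn0 => [|L].
    apply: eq_in_count => L; rewrite mem_iota => /andP [L_gt0 _] /=.
    case: leqP => L_fits; last by rewrite andbF /ends_cube leqNgt L_fits.
    by rewrite andbT (@ends_cube_shift a.+3) //; lia.
  rewrite mem_iota /= => L_bd; rewrite (_ : 3 * L <= n - t a.+3 = false) ?andbF //.
  by apply/negbTE; rewrite -ltnNge; lia.
have ta_in : t a \in iota 1 n by rewrite mem_iota; have := t_gt0 a; lia.
rewrite (count_singleton (x0 := t a) (iota_uniq 1 n) ta_in) /= /ends_cube; last first.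
  move=> L /andP [/andP [L_fits cube]]; rewrite -ltnNge => short.
  by apply: (straddling_cube_period (n := n)); lia.
case: (boolP (_ <= n <= _)) => window; first by rewrite cube_window // andbT; lia.
apply/eqP; rewrite eqb0; apply: contra window => /andP [/andP [fits cube]].
by rewrite -ltnNge => short; apply: (straddling_cube_window (L := t a)); rewrite ?t_gt0; lia.
Qed.

Lemma GammaE k : 0 < k -> Gamma k.+1 = iota (tsum k).+1 (t k).
Proof.
case: k => // k _; rewrite /Gamma !subSS !subn0.
by have := tsumS_double k; have := tsumS_double k.+1; have := tsumS k.+1 => *; congr iota; lia.
Qed.

Lemma size_vadd u v : size (vadd u v) = minn (size u) (size v).
Proof. by rewrite size_map size_zip. Qed.

Lemma nth_vadd u v j : size u = size v -> nth 0 (vadd u v) j = nth 0 u j + nth 0 v j.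
Proof.
move=> eq_size; case: (ltnP j (size u)) => j_lt.
  by rewrite (nth_map (0, 0)) ?nth_zip // size_zip -eq_size minnn.
by rewrite !nth_default // ?size_vadd -?eq_size ?minnn.
Qed.

Lemma nth_indicator A B C j :
  nth 0 (nseq A 0 ++ nseq B 1 ++ nseq C 0) j = (A <= j < A + B).
Proof.
rewrite !nth_cat !size_nseq !nth_nseq; case: (ltnP j A) => [|le_Aj] /=; first by [].
by case: ltnP; rewrite ?if_same; lia.
Qed.

Lemma dV_Gamma_rec m : 10 <= m ->
  let U := dV (Gamma (m - 3)) ++ dV (Gamma (m - 2)) ++ dV (Gamma (m - 1)) in
  let E := nseq ((5 * t (m - 4) + 1 - t (m - 2)) %/ 2) 0
           ++ nseq ((t (m - 2) - 3 * t (m - 4) - 1) %/ 2) 1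
           ++ nseq (t (m - 2) + t (m - 3)) 0 in
  size E = size U /\ dV (Gamma m) = vadd U E.
Proof.
move=> m_ge; have [a m_eq] : exists a, m = a.+4 by exists (m - 4); lia.
rewrite m_eq !subSS !subn0 => U E; have [b a_eq] : exists b, a = b.+1 by exists a.-1; lia.
have := tsumS_double b; have := t_rec b; rewrite -a_eq.
have := tsumS a; have := tsumS a.+1; have := tsumS a.+2; have := tsumS3 a.
have := tsum_lt_double a; have : t a <= tsum a by apply: t_leq_tsum; lia.
move=> *.
have a_gt0 : 0 < a by lia.
have U_eq : U = map d (iota (tsum a).+1 (t a.+3)).
  rewrite /U /dV -!map_cat !GammaE // (_ : t a.+3 = t a + (t a.+1 + t a.+2)); last lia.
  by rewrite !iotaD; congr (map d (_ ++ iota _ _ ++ iota _ _)); lia.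
have [size_E nth_E] : size E = t a.+3 /\ forall j,
    nth 0 E j = (t a.+3 + 2 * t a <= (tsum a.+3).+1 + j <= t a.+3 + tsum a.+1).
  rewrite /E !size_cat !size_nseq; split=> [|j]; first lia.
  by rewrite nth_indicator; congr nat_of_bool; apply/idP/idP; lia.
have size_U : size U = t a.+3 by rewrite U_eq size_map size_iota.
split; first by rewrite size_E size_U.
rewrite GammaE // /dV; apply: (@eq_from_nth _ 0) => [|j].
  by rewrite size_vadd size_map size_iota size_E size_U minnn.
rewrite size_map size_iota => j_lt; rewrite nth_vadd ?size_E // nth_E U_eq.
rewrite !(nth_map 0) ?size_iota // !nth_iota // (@d_rec a); [|lia|rewrite (tsumS a.+3); lia].
by congr (d _ + _); lia.
Qed.

(** * Initial values *)

(* The cube of period L ending at n starts at position n + 1 - 3L, that is at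
   index n - 3L of the list w. *)
Definition count_cubes (w : seq nat) n :=
  count (fun L => (3 * L <= n) &&
    (take L.*2 (drop (n - 3 * L) w) == take L.*2 (drop (n - 3 * L + L) w))) (iota 1 n).

Lemma factor_sigma_iter k i N : 0 < i -> i + N <= (t k).+1 ->
  factor i N = take N (drop i.-1 (sigma_iter k)).
Proof.
move=> i_gt0 fits; apply: (@eq_from_nth _ 0) => [|u]; rewrite size_factor.
  by rewrite size_take size_drop size_sigma_iter; case: ltnP; lia.
move=> u_lt; rewrite nth_factor // nth_take // nth_drop.
by rewrite (trib_sigma_iter (k := k)); [congr nth | ]; lia.
Qed.

Lemma d_count_cubes k n : n <= t k -> d n = count_cubes (sigma_iter k) n.
Proof.
move=> n_le; rewrite dE; apply: eq_in_count => L; rewrite mem_iota => /andP [L_gt0 _].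
rewrite /ends_cube; case: leqP => //= L_fits.
rewrite /is_cube_at !(factor_sigma_iter (k := k)); [|lia|lia|lia|lia].
by congr (take _ (drop _ _) == take _ (drop _ _)); lia.
Qed.

Lemma dV_count_cubes k V : all (leq^~ (t k)) V -> dV V = map (count_cubes (sigma_iter k)) V.
Proof. by move/allP=> V_le; apply/eq_in_map => n /V_le; apply: d_count_cubes. Qed.

Lemma d_le51 n : 0 < n <= 51 -> d n = 0.
Proof.
have : all (fun n => count_cubes (sigma_iter 10) n == 0) (iota 1 51) by vm_compute.
move/allP/(_ n) => d0 n_bd.
rewrite (d_count_cubes (k := 10)); last by rewrite (_ : t 10 = 504) //; lia.
by apply/eqP/d0; rewrite mem_iota; lia.
Qed.

Lemma dV_Gamma7 : dV (Gamma 7) = nseq 6 0 ++ [:: 1] ++ nseq 37 0.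
Proof. by rewrite (dV_count_cubes (k := 10)); vm_compute. Qed.

Lemma dV_Gamma8 : dV (Gamma 8) = nseq 11 0 ++ [:: 1; 1] ++ nseq 30 0 ++ [:: 1] ++ nseq 37 0.
Proof. by rewrite (dV_count_cubes (k := 10)); vm_compute. Qed.

Lemma dV_Gamma9 : dV (Gamma 9) = nseq 20 0 ++ nseq 4 1 ++ nseq 6 0 ++ [:: 1] ++ nseq 48 0
                 ++ [:: 1; 1] ++ nseq 30 0 ++ [:: 1] ++ nseq 37 0.
Proof. by rewrite (dV_count_cubes (k := 10)); vm_compute. Qed.

Theorem mainTheorem8 :
  (forall n, 0 < n <= 51 -> d n = 0) /\
  Gamma 7 = iota 52 (95 - 52 + 1) /\
  dV (Gamma 7) = nseq 6 0 ++ [:: 1] ++ nseq 37 0 /\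
  Gamma 8 = iota 96 (176 - 96 + 1) /\
  dV (Gamma 8) = nseq 11 0 ++ [:: 1; 1] ++ nseq 30 0 ++ [:: 1] ++ nseq 37 0 /\
  Gamma 9 = iota 177 (325 - 177 + 1) /\
  dV (Gamma 9) = nseq 20 0 ++ nseq 4 1 ++ nseq 6 0 ++ [:: 1] ++ nseq 48 0
                 ++ [:: 1; 1] ++ nseq 30 0 ++ [:: 1] ++ nseq 37 0 /\
  (forall m, 10 <= m ->
     let U := dV (Gamma (m - 3)) ++ dV (Gamma (m - 2)) ++ dV (Gamma (m - 1)) in
     let E := nseq ((5 * t (m - 4) + 1 - t (m - 2)) %/ 2) 0
              ++ nseq ((t (m - 2) - 3 * t (m - 4) - 1) %/ 2) 1
              ++ nseq (t (m - 2) + t (m - 3)) 0 in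
     size E = size U /\ dV (Gamma m) = vadd U E).
Proof.
split; first exact: d_le51.
split; first by vm_compute.
split; first exact: dV_Gamma7.
split; first by vm_compute.
split; first exact: dV_Gamma8.
split; first by vm_compute.
split; first exact: dV_Gamma9.
exact: dV_Gamma_rec.
Qed.
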